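(* Let $\mathcal{P} \subseteq \mathcal{X}$ be a finite point set, let $k \ge 1$ be an integer, let $r \in [0, k-1]$ be an integer and let $\eta \ge 1$. If $\mathrm{OPT}_{k-r}(\mathcal{P}) \le \eta \cdot \mathrm{OPT}_k(\mathcal{P})$, then $\mathrm{OPT}_k(\mathcal{P}) \le 4 \cdot \mathrm{OPT}_{k + \lfloor r/(12\eta) \rfloor}(\mathcal{P})$.
   Context: $(\mathcal{X}, d)$ is a metric space (the ground set) and $\mathcal{P} \subseteq \mathcal{X}$ is finite. For a set $\mathcal{U} \subseteq \mathcal{X}$, $\mathrm{cost}(\mathcal{U},\mathcal{P}) = \sum_{p \in \mathcal{P}} \min_{q \in \mathcal{U}} d(p,q)$. For an integer $t \ge 1$, $\mathrm{OPT}_t(\mathcal{P}) = \min_{\mathcal{U} \subseteq \mathcal{X},\, |\mathcal{U}| \le t} \mathrm{cost}(\mathcal{U},\mathcal{P})$ (the optimal ''improper'' $t$-median cost, where centers may be any points of $\mathcal{X}$, not necessarily of $\mathcal{P}$). *)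

From mathcomp Require Import all_boot all_order all_algebra.
From mathcomp Require Import all_classical all_reals.
Set Implicit Arguments. Unset Strict Implicit. Unset Printing Implicit Defensive.
Import Order.TTheory GRing.Theory Num.Theory.
Local Open Scope ring_scope.
Local Open Scope classical_set_scope.

Definition is_metric (R : realType) (X : Type) (d : X -> X -> R) : Prop :=
  [/\ (forall x y, 0 <= d x y),
      (forall x y, d x y = 0 <-> x = y),
      (forall x y, d x y = d y x) &
      (forall x y z, d x z <= d x y + d y z)].

Definition dist_to (R : realType) (X : Type) (d : X -> X -> R)
    (U : seq X) (p : X) : R :=
  match U with
  | [::] => 0
  | q0 :: _ => \big[Order.min/d p q0]_(q <- U) d p q
  end.

Definition cost (R : realType) (X : Type) (d : X -> X -> R)
    (U P : seq X) : R :=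
  \sum_(p <- P) dist_to d U p.

Definition OPT (R : realType) (X : Type) (d : X -> X -> R)
    (t : nat) (P : seq X) : R :=
  inf [set c | exists U : seq X, [/\ (0 < size U)%N, (size U <= t)%N & c = cost d U P]].

From mathcomp Require Import all_boot all_order all_algebra.
From mathcomp Require Import all_classical all_reals.
From mathcomp Require Import ring lra zify.
Import Order.TTheory GRing.Theory Num.Theory.
Set Implicit Arguments. Unset Strict Implicit.
Local Open Scope ring_scope.
Local Open Scope classical_set_scope.

(* Fix a solution T with at most k - r centers and a solution S with at most
   k + m centers. While S has more than k centers, at least r of them are
   shadowed: another center of S has the same nearest center in T and is at
   least as close to it. Give each center of S the weight of its cluster, each
   point p counting d(p,S) + d(p,T), so that the weights add up to
   cost S + cost T. Deleting the lightest shadowed center multiplies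
   cost S + cost T by at most 1 + 2/r, so after m deletions
   OPT_k + cost T <= (1 + 2/r)^m (cost S + cost T). Taking the infimum over T
   and using OPT_(k-r) <= eta OPT_k and 2m/r <= 1/(6 eta) gives
   OPT_k <= 3/2 cost S. *)

Section NearestCenter.
Variables (R : realType) (X : eqType) (d : X -> X -> R).
Implicit Types (U V P : seq X) (p q : X).

Lemma dist_to_le U p q : q \in U -> dist_to d U p <= d p q.
Proof. by case: U => [//|u U] qU; exact: ge_bigmin_seq. Qed.

Lemma dist_to_mem U p : U != [::] -> dist_to d U p \in map (d p) U.
Proof.
case: U => [//|u U] _; rewrite /dist_to.
have bigmin_mem s : \big[Order.min/d p u]_(q <- s) d p q \in d p u :: map (d p) s.
  elim: s => [|v s IH]; first by rewrite big_nil mem_head.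
  rewrite big_cons /Order.min; case: ifP => _; first by rewrite !inE eqxx orbT.
  by move: IH; rewrite /= !inE => /orP[->|->]; rewrite ?orbT.
by have := bigmin_mem (u :: U); rewrite inE => /predU1P[->|]; rewrite ?mem_head.
Qed.

Definition nearest U p := nth p U (index (dist_to d U p) (map (d p) U)).

Lemma nearestP U p :
  U != [::] -> nearest U p \in U /\ d p (nearest U p) = dist_to d U p.
Proof.
move=> /(dist_to_mem p) mem_dist.
have lt_index : (index (dist_to d U p) (map (d p) U) < size U)%N.
  by rewrite -(size_map (d p)) index_mem.
by rewrite mem_nth // /nearest -(nth_map p (d p p)) // nth_index.
Qed.

Lemma dist_to_subset U V p :
  V != [::] -> {subset V <= U} -> dist_to d U p <= dist_to d V p.
Proof.
by move=> /(nearestP p) [qV <-] sub_VU; apply/dist_to_le/sub_VU.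
Qed.

Lemma dist_to_eq_mem U V p : U =i V -> dist_to d U p = dist_to d V p.
Proof.
case: U => [|u U]; case: V => [|v V] // eqUV.
- by have := eqUV v; rewrite mem_head.
- by have := eqUV u; rewrite mem_head.
- by apply/le_anti; rewrite !dist_to_subset // => q; rewrite eqUV.
Qed.

Lemma cost_undup U P : cost d (undup U) P = cost d U P.
Proof. by apply: eq_bigr => p _; apply: dist_to_eq_mem => q; rewrite mem_undup. Qed.

Lemma le_OPT (x0 : X) t P c : (0 < t)%N ->
  (forall U, (0 < size U)%N -> (size U <= t)%N -> c <= cost d U P) ->
  c <= OPT d t P.
Proof.
move=> t_gt0 lbc; apply: lb_le_inf; first by exists (cost d [:: x0] P), [:: x0].
by move=> _ [U [U_gt0 Ut ->]]; apply: lbc.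
Qed.

Lemma OPT_void t P : (X -> False) -> OPT d t P = 0.
Proof.
move=> noX; rewrite /OPT (_ : [set c | _] = set0) ?inf0 //.
by apply/seteqP; split=> // c [[|u U] [] //]; case: (noX u).
Qed.

Hypothesis d_ge0 : forall p q, 0 <= d p q.

Lemma dist_to_ge0 U p : 0 <= dist_to d U p.
Proof. by case: U => [//|u U]; have [_ <-] := nearestP p (isT : u :: U != [::]). Qed.

Lemma cost_ge0 U P : 0 <= cost d U P.
Proof. by apply: sumr_ge0 => p _; apply: dist_to_ge0. Qed.

Lemma OPT_ge0 t P : 0 <= OPT d t P.
Proof.
rewrite /OPT; set E := [set c | _].
have [E0|/set0P E_neq0] := eqVneq E set0; first by rewrite E0 inf0.
by apply: lb_le_inf => // _ [U [_ _ ->]]; apply: cost_ge0.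
Qed.

Lemma OPT_le_cost t P U :
  (0 < size U)%N -> (size U <= t)%N -> OPT d t P <= cost d U P.
Proof.
move=> U_gt0 Ut; apply: ge_inf; last by exists U.
by exists 0 => _ [V [_ _ ->]]; apply: cost_ge0.
Qed.

Hypothesis d_triangle : forall p q q', d p q' <= d p q + d q q'.

Lemma dist_to_le_add U p q : U != [::] -> dist_to d U p <= d p q + dist_to d U q.
Proof.
by move=> /(nearestP q) [uU <-]; apply: le_trans (d_triangle _ q _); apply: dist_to_le.
Qed.

End NearestCenter.

Lemma exists_le_mean (R : realDomainType) (I : eqType) (s : seq I) (F : I -> R) :
  s != [::] -> exists2 i, i \in s & (size s)%:R * F i <= \sum_(j <- s) F j.
Proof.
move=> s_neq0.
suff /hasP[i si] : has (fun i => (size s)%:R * F i <= \sum_(j <- s) F j) s.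
  by exists i.
apply/negPn/negP => /hasPn above_mean.
have : \sum_(i <- s) \sum_(j <- s) F j < \sum_(i <- s) (size s)%:R * F i.
  rewrite big_seq_cond [X in _ < X]big_seq_cond.
  apply: ltr_sum => [|i /andP[si _]]; last by rewrite ltNge above_mean.
  by case: s s_neq0 {above_mean} => // i s _; apply/hasP; exists i; rewrite ?mem_head.
by rewrite -mulr_sumr big_const_seq count_predT iter_addr_0 mulr_natl ltxx.
Qed.

Section CenterRemoval.
Variables (R : realType) (X : eqType) (d : X -> X -> R) (P S T : seq X).
Hypotheses (d_metric : is_metric d) (S_uniq : uniq S).
Hypotheses (S_neq0 : S != [::]) (T_neq0 : T != [::]).

Definition shadowed s := has (fun s' => [&& s' != s,
  nearest d T s' == nearest d T s & dist_to d T s' <= dist_to d T s]) S.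

Definition weight s :=
  \sum_(p <- P | nearest d S p == s) (dist_to d S p + dist_to d T p).

Lemma count_shadowed : (size S - size T <= count shadowed S)%N.
Proof.
(* nearest d T is injective on the unshadowed centers. *)
suff : (count (predC shadowed) S <= size T)%N by have := count_predC shadowed S; lia.
rewrite -size_filter -(size_map (nearest d T)); apply: uniq_leq_size.
  rewrite map_inj_in_uniq ?filter_uniq // => s s'.
  rewrite !mem_filter => /andP[/hasPn s_alone sS] /andP[/hasPn s'_alone s'S] eq_near.
  apply/eqP/negPn/negP => neq_ss'.
  have := s_alone s' s'S; have := s'_alone s sS.
  rewrite eq_near neq_ss' eq_sym neq_ss' eqxx /= -!ltNge => lt1 lt2.
  by have := lt_trans lt1 lt2; rewrite ltxx.
by move=> _ /mapP[s _ ->]; case: (nearestP d s T_neq0).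
Qed.

Lemma sum_weight : \sum_(s <- S) weight s = cost d S P + cost d T P.
Proof.
rewrite /weight (exchange_big_dep predT) //= /cost -big_split /=.
apply: eq_bigr => p _.
have [pS _] := nearestP d p S_neq0.
rewrite -big_filter (_ : [seq s <- S | nearest d S p == s] = [:: nearest d S p]).
  by rewrite big_seq1.
by rewrite -(filter_pred1_uniq S_uniq pS); apply: eq_filter => s; rewrite eq_sym.
Qed.

Lemma dist_to_rem_shadowed s p : shadowed s ->
  dist_to d (rem s S) p <= dist_to d S p +
    (if nearest d S p == s then 2 * (dist_to d S p + dist_to d T p) else 0).
Proof.
have [_ _ d_sym d_tri] := d_metric.
case/hasP=> s' s'S /and3P[neq_s's /eqP near_s's le_s's].
have [pS dist_pS] := nearestP d p S_neq0.
case: eqP => [near_ps|/eqP near_ps]; last first.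
  by rewrite addr0 -dist_pS dist_to_le // mem_rem_uniq // inE near_ps.
have s'_rem : s' \in rem s S by rewrite mem_rem_uniq // inE neq_s's.
(* Reroute p to s': d p s' <= d p s + d(s,T) + d(s',T) <= d(p,S) + 2 d(s,T),
   and d(s,T) <= d(p,S) + d(p,T). *)
apply: le_trans (dist_to_le d p s'_rem) _.
have [_ dist_sT] := nearestP d s T_neq0.
have [_ dist_s'T] := nearestP d s' T_neq0.
have via_s := d_tri p s s'.
have via_Ts := d_tri s (nearest d T s) s'.
have dist_Ts_s' : d (nearest d T s) s' = dist_to d T s'.
  by rewrite d_sym -near_s's dist_s'T.
have dist_sT_le : dist_to d T s <= d p s + dist_to d T p.
  by rewrite d_sym; apply: dist_to_le_add.
rewrite near_ps in dist_pS; rewrite dist_pS in via_s dist_sT_le.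
rewrite dist_sT in via_Ts; lra.
Qed.

Lemma weight_ge0 s : 0 <= weight s.
Proof.
have [d_ge0 _ _ _] := d_metric.
by apply: sumr_ge0 => p _; rewrite addr_ge0 ?dist_to_ge0.
Qed.

Lemma cost_rem_shadowed s : shadowed s ->
  cost d (rem s S) P <= cost d S P + 2 * weight s.
Proof.
move=> shadowed_s; rewrite /cost /weight mulr_sumr [X in _ + X]big_mkcond -big_split /=.
by apply: ler_sum => p _; apply: dist_to_rem_shadowed.
Qed.

Lemma exists_cheap_removal : (size T < size S)%N ->
  exists S', [/\ S' != [::], (size S' < size S)%N &
    cost d S' P <= cost d S P + 2 * (cost d S P + cost d T P) / (size S - size T)%:R].
Proof.
move=> lt_TS; set shadowedS := [seq s <- S | shadowed s].
have le_shadowedS : (size S - size T <= size shadowedS)%N.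
  by rewrite size_filter; apply: count_shadowed.
have shadowedS_neq0 : shadowedS != [::] by rewrite -size_eq0 -lt0n; lia.
have [s] := exists_le_mean weight shadowedS_neq0.
rewrite mem_filter => /andP[shadowed_s sS] mean_s.
have /hasP[s' s'S /andP[neq_s's _]] := shadowed_s.
exists (rem s S); split.
- by apply/eqP=> rem0; have := mem_rem_uniq s S_uniq s'; rewrite rem0 !inE neq_s's s'S.
- by rewrite size_rem //; case: (S) S_neq0.
apply: le_trans (cost_rem_shadowed shadowed_s) _.
rewrite lerD2l -mulrA ler_wpM2l // ler_pdivlMr ?ltr0n ?subn_gt0 //.
have sum_shadowed : \sum_(s <- shadowedS) weight s <= cost d S P + cost d T P.
  rewrite -sum_weight big_filter big_mkcond /=.
  by apply: ler_sum => x _; case: ifP => // _; apply: weight_ge0.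
apply: le_trans sum_shadowed; apply: le_trans mean_s.
by rewrite mulrC ler_wpM2r ?weight_ge0 // ler_nat.
Qed.

End CenterRemoval.

Lemma shrink_centers (R : realType) (X : eqType) (d : X -> X -> R) (P T : seq X)
    (k r : nat) :
  is_metric d -> T != [::] -> (size T + r <= k)%N -> (0 < r)%N ->
  forall j S, S != [::] -> (size S <= k + j)%N ->
  exists S', [/\ S' != [::], (size S' <= k)%N &
    cost d S' P + cost d T P <= (1 + 2 / r%:R) ^+ j * (cost d S P + cost d T P)].
Proof.
move=> d_metric T_neq0 le_Tk r_gt0; have [d_ge0 _ _ _] := d_metric.
have costs_ge0 U : 0 <= cost d U P + cost d T P by rewrite addr_ge0 ?cost_ge0.
have growth_ge0 j : 0 <= (1 + 2 / r%:R : R) ^+ j by rewrite exprn_ge0 ?addr_ge0 ?divr_ge0.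
elim=> [|j IH] S S_neq0 le_Skj.
  by exists S; rewrite expr0 mul1r -(addn0 k).
rewrite -(cost_undup d S); set S0 := undup S.
have S0_neq0 : S0 != [::] by apply: contra_neq S_neq0; apply: undup_nil.
have [le_S0kj|lt_kj_S0] := leqP (size S0) (k + j).
  have [S' [S'_neq0 le_S'k cost_S']] := IH S0 S0_neq0 le_S0kj.
  exists S'; split => //; apply: le_trans cost_S' _.
  by rewrite exprS -mulrA ler_peMl ?mulr_ge0 // lerDl divr_ge0.
have lt_TS0 : (size T < size S0)%N by lia.
have [S1 [S1_neq0 lt_S1S0 cost_S1]] :=
  exists_cheap_removal P d_metric (undup_uniq S) S0_neq0 T_neq0 lt_TS0.
have le_S0 : (size S0 <= k + j.+1)%N := leq_trans (size_undup S) le_Skj.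
rewrite -/S0 in lt_S1S0 cost_S1.
have le_S1 : (size S1 <= k + j)%N by lia.
have [S' [S'_neq0 le_S'k cost_S']] := IH S1 S1_neq0 le_S1.
exists S'; split => //; apply: le_trans cost_S' _.
rewrite exprS -mulrA mulrCA ler_wpM2l //.
have le_inv : (size S0 - size T)%:R^-1 <= r%:R^-1 :> R.
  by rewrite lef_pV2 ?posrE ?ltr0n ?ler_nat; lia.
have := ler_wpM2l (mulr_ge0 (ler0n R 2) (costs_ge0 S0)) le_inv.
lra.
Qed.

Lemma expr1D_mul_1Bn_le1 (R : realFieldType) (x : R) (n : nat) :
  0 <= x -> (1 + x) ^+ n * (1 - n%:R * x) <= 1.
Proof.
move=> x_ge0; elim: n => [|n IH]; first by rewrite expr0 mul0r subr0 mul1r.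
have pow_ge0 : 0 <= (1 + x) ^+ n by rewrite exprn_ge0 // addr_ge0.
have step : (1 + x) * (1 - n.+1%:R * x) <= 1 - n%:R * x.
  have : 0 <= n.+1%:R * (x * x) by rewrite !mulr_ge0.
  by rewrite -addn1 natrD; lra.
by rewrite exprS mulrAC mulrC; apply: le_trans (ler_wpM2l pow_ge0 step) IH.
Qed.

Lemma OPT_tradeoff_cost (R : realType) (X : eqType) (d : X -> X -> R)
    (P T U : seq X) (k r m : nat) :
  is_metric d -> (0 < r)%N -> T != [::] -> (size T + r <= k)%N ->
  U != [::] -> (size U <= k + m)%N ->
  (1 - m%:R * (2 / r%:R)) * OPT d k P <= cost d U P + m%:R * (2 / r%:R) * cost d T P.
Proof.
move=> d_metric r_gt0 T_neq0 le_Tk U_neq0 le_Ukm; have [d_ge0 _ _ _] := d_metric.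
set x := 2 / r%:R; have x_ge0 : 0 <= x by rewrite divr_ge0 ?ler0n.
have [S' [S'_neq0 le_S'k cost_S']] :=
  shrink_centers P d_metric T_neq0 le_Tk r_gt0 U_neq0 le_Ukm.
have OPT_le : OPT d k P <= cost d S' P by rewrite OPT_le_cost // lt0n size_eq0.
have OPT_ge0 := OPT_ge0 d_ge0 k P.
have cT_ge0 := cost_ge0 d_ge0 T P; have cU_ge0 := cost_ge0 d_ge0 U P.
have yT_ge0 : 0 <= m%:R * x * cost d T P by do 2?apply: mulr_ge0.
have [y_le1|y_gt1] := leP (m%:R * x) 1; last by nra.
have OPT_cT_le : OPT d k P + cost d T P <= (1 + x) ^+ m * (cost d U P + cost d T P).
  by apply: le_trans cost_S'; rewrite lerD2r.
have := ler_wpM2l (_ : 0 <= 1 - m%:R * x) OPT_cT_le.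
have := ler_wpM2r (addr_ge0 cU_ge0 cT_ge0) (expr1D_mul_1Bn_le1 m x_ge0).
lra.
Qed.

Lemma OPT_tradeoff (R : realType) (X : eqType) (d : X -> X -> R) (P U : seq X)
    (k r m : nat) :
  is_metric d -> (0 < r)%N -> (0 < m)%N -> (r < k)%N ->
  U != [::] -> (size U <= k + m)%N ->
  (1 - m%:R * (2 / r%:R)) * OPT d k P <=
    cost d U P + m%:R * (2 / r%:R) * OPT d (k - r) P.
Proof.
move=> d_metric r_gt0 m_gt0 lt_rk U_neq0 le_Ukm.
have [x0 _] : exists x0, x0 \in U by case: (U) U_neq0 => // u V _; exists u; rewrite mem_head.
have y_gt0 : 0 < m%:R * (2 / r%:R) :> R by rewrite mulr_gt0 ?divr_gt0 ?ltr0n.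
rewrite -lerBlDl -ler_pdivrMl //.
apply: (le_OPT x0) => [|T T_gt0 le_Tkr]; first by rewrite subn_gt0.
have T_neq0 : T != [::] by rewrite -size_eq0 -lt0n.
have le_Tk : (size T + r <= k)%N by lia.
rewrite ler_pdivrMl // lerBlDl.
exact: OPT_tradeoff_cost d_metric r_gt0 T_neq0 le_Tk U_neq0 le_Ukm.
Qed.

Lemma OPT_le_three_halves (R : realType) (X : eqType) (d : X -> X -> R) (P : seq X)
    (k r m : nat) (eta : R) :
  is_metric d -> (r < k)%N -> 1 <= eta -> m%:R * (12 * eta) <= r%:R ->
  OPT d (k - r) P <= eta * OPT d k P ->
  OPT d k P <= 3 / 2 * OPT d (k + m) P.
Proof.
move=> d_metric lt_rk eta_ge1 m_small OPT_kr; have [d_ge0 _ _ _] := d_metric.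
have OPT_ge0 t := OPT_ge0 d_ge0 t P.
have [->|m_gt0] := posnP m; first by rewrite addn0; have := OPT_ge0 k; lra.
have [[x0]|noX] := pselect (inhabited X); last first.
  by rewrite !OPT_void ?mulr0 // => x; apply: noX.
have r_gt0 : (0 < r)%N.
  rewrite -(ltr0n R); apply: lt_le_trans m_small.
  by rewrite mulr_gt0 ?ltr0n //; lra.
pose y : R := m%:R * (2 / r%:R).
have y_gt0 : 0 < y by rewrite mulr_gt0 ?divr_gt0 ?ltr0n.
have y_eta : y * eta <= 1 / 6.
  have -> : y * eta = m%:R * (12 * eta) / r%:R / 6.
    by rewrite /y; field; rewrite pnatr_eq0 -lt0n.
  by rewrite !ler_pdivrMr ?ltr0n //; lra.
have y_le : y <= 1 / 6 by apply: le_trans y_eta; rewrite ler_peMr // ltW.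
have OPT_lb : 2 / 3 * OPT d k P <= OPT d (k + m) P.
  apply: (le_OPT x0) => [|U U_gt0 le_Ukm]; first by rewrite addn_gt0 m_gt0 orbT.
  have U_neq0 : U != [::] by rewrite -size_eq0 -lt0n.
  have := OPT_tradeoff P d_metric r_gt0 m_gt0 lt_rk U_neq0 le_Ukm; rewrite -/y.
  have := ler_wpM2l (ltW y_gt0) OPT_kr.
  have := ler_wpM2r (OPT_ge0 k) y_eta; have := ler_wpM2r (OPT_ge0 k) y_le.
  lra.
by have := OPT_ge0 k; lra.
Qed.

Theorem lemma4p1 (R : realType) (X : eqType) (d : X -> X -> R)
    (P : seq X) (k r : nat) (eta : R) :
  is_metric d -> uniq P ->
  (1 <= k)%N -> (r <= k - 1)%N -> 1 <= eta ->
  OPT d (k - r) P <= eta * OPT d k P ->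
  OPT d k P <= 4 * OPT d (k + Num.truncn (r%:R / (12 * eta))) P.
Proof.
move=> d_metric _ k_ge1 le_r eta_ge1 OPT_kr; have [d_ge0 _ _ _] := d_metric.
have lt_rk : (r < k)%N by lia.
have m_small : (Num.truncn (r%:R / (12 * eta)))%:R * (12 * eta) <= r%:R.
  by rewrite -ler_pdivlMr ?truncn_le ?divr_ge0 ?mulr_ge0 //; lra.
have := OPT_le_three_halves d_metric lt_rk eta_ge1 m_small OPT_kr.
by have := OPT_ge0 d_ge0 (k + Num.truncn (r%:R / (12 * eta))) P; lra.
Qed.
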